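(* Every point $\zeta\in\partial(\Gamma,\mathcal{P})$ has a strict $\mathcal{G}$-coding (either a strict conical coding of $\zeta$ or a strict parabolic coding of $\zeta$).
   Context: Setup. $\Gamma$ is a finitely generated group hyperbolic relative to a finite nonempty collection $\mathcal{P}$ of infinite subgroups, with $(\Gamma,\mathcal{P})$ non-elementary, and $\mathcal{S}$ a finite symmetric generating set with $P\cap\mathcal{S}$ generating $P$ for each $P\in\mathcal{P}$. $X$ is the Groves–Manning cusped space (the Cayley graph with combinatorial horoballs glued along the cosets $gP$), a locally finite graph with unit edges, metric $d_X$, $\delta$-hyperbolic for a fixed integer $\delta\ge1$; $|g|_X=d_X(\mathrm{id},g)$. Its Gromov boundary is the Bowditch boundary $\partial(\Gamma,\mathcal{P})$, with a fixed metric $d_\partial$ (balls $B_r$, neighborhoods $N_r$, closed neighborhoods $\overline N_r$, $\operatorname{diam}$ w.r.t. $d_\partial$). $\Pi$ is the finite set of points fixed by groups in $\mathcal{P}$, $\Gamma_p$ the group fixing $p\in\Pi$; translates $gp$ are parabolic points, and all other boundary points are conical limit points. $D>0$ is such that any distinct $x,y$ have some $g\in\Gamma$ with $d_\partial(gx,gy)>D$; for $p\in\Pi$, $K_p\subset\partial(\Gamma,\mathcal{P})\setminus\{p\}$ is compact with $\Gamma_pK_p=\partial(\Gamma,\mathcal{P})\setminus\{p\}$, and $D_\Pi>0$ satisfies $D_\Pi<\operatorname{diam}K_p$, $D_\Pi<d_\partial(K_p,p)$ for all $p$. Automaton. Fix $0<\varepsilon<\min(D/5,D_\Pi/5)$,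 a finite set $Z\subset\partial(\Gamma,\mathcal{P})$, and for each $z\in Z$ open sets $V(z),W(z),\hat V(z),\hat W(z)$ and a set $L(z)\subset\Gamma$ such that: if $z$ is conical, $L(z)=\{\alpha_z\}$, $\hat V(z)=\alpha_z^{-1}V(z)$, $\hat W(z)=\alpha_z^{-1}W(z)$; if $z=gp$ is parabolic ($p\in\Pi$), then $L(z)=g\Gamma_p\setminus F_z$ for a finite set $F_z$, $\hat V(z)\subset\hat W(z)\subset\partial(\Gamma,\mathcal{P})\setminus\{p\}$ and $p\notin\overline N_\varepsilon(\hat W(z))$; the sets $V(z)$, $z\in Z$, cover $\partial(\Gamma,\mathcal{P})$; and for all $z\in Z$: (C1) $\operatorname{diam}W(z)<\varepsilon$; (C2) $\operatorname{diam}\hat W(z)>4\varepsilon$; (C3) $\overline N_{2\varepsilon}(\hat V(z))\subset\hat W(z)$; (C4) $W(z)=\{z\}\cup\bigcup_{\alpha\in L(z)}\alpha\hat W(z)$; (C5) $V(z)=\{z\}\cup\bigcup_{\alpha\in L(z)}\alpha\hat V(z)$ and $\overline{V(z)}\subset W(z)$; (C6) for all $y,z\in Z$, $\overline{\hat V(z)}\cap\overline{V(y)}=\emptyset$ iff $\hat V(z)\cap V(y)=\emptyset$. The automaton $\mathcal{G}$ is the directed graph with vertex set $Z$ where, for $y,z\in Z$, there is no edge from $z$ to $y$ if $\hat V(z)\cap V(y)=\emptyset$, and otherwise there is exactly one edge from $z$ to $y$ labeled $\alpha$ for each $\alpha\in L(z)$. For an edge $e$, $\iota(e),\tau(e),\mathrm{Lab}(e)$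 denote its initial vertex, terminal vertex and label. Codings. A strict conical coding is an infinite edge path $\mathbf e=(e_k)_{k\ge1}$ in $\mathcal{G}$; writing $\alpha_k=\mathrm{Lab}(e_k)$, $z_k=\tau(e_k)$ ($k\ge1$), $z_0=\iota(e_1)$, it is a strict coding of $\zeta$ if $\zeta\in\bigcap_{k\ge0}\alpha_1\cdots\alpha_k\overline{W(z_k)}$. A strict parabolic coding is a finite edge path $e_1,\dots,e_n$ ($n\ge0$; for $n=0$ it is a single vertex) whose final vertex $q$ is parabolic; it is a strict coding of $\zeta$ if $\zeta=\alpha_1\cdots\alpha_nq$. *)

From Stdlib Require Import Reals List.
Open Scope R_scope.

Record BoundarySetting (Gam B : Type) := {
  gmul : Gam -> Gam -> Gam;
  ginv : Gam -> Gam;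
  gone : Gam;
  gmulA : forall a b c, gmul a (gmul b c) = gmul (gmul a b) c;
  gmul1l : forall a, gmul gone a = a;
  gmul1r : forall a, gmul a gone = a;
  gmulVl : forall a, gmul (ginv a) a = gone;
  gmulVr : forall a, gmul a (ginv a) = gone;
  act : Gam -> B -> B;
  act1 : forall x, act gone x = x;
  actM : forall g h x, act (gmul g h) x = act g (act h x);
  dist : B -> B -> R;
  dist_ge0 : forall x y, 0 <= dist x y;
  dist_eq0 : forall x y, dist x y = 0 <-> x = y;
  dist_sym : forall x y, dist x y = dist y x;
  dist_tri : forall x y z, dist x z <= dist x y + dist y z;
  act_cont : forall g x e, 0 < e -> exists r, 0 < r /\
      forall y, dist x y < r -> dist (act g x) (act g y) < e;
  (* the finite nonempty set Pi of points fixed by the peripheral groups *)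
  Pi : list B;
  Pi_nonempty : Pi <> nil
}.

Arguments gmul {Gam B} _ _ _.
Arguments ginv {Gam B} _ _.
Arguments gone {Gam B} _.
Arguments act {Gam B} _ _ _.
Arguments dist {Gam B} _ _ _.
Arguments Pi {Gam B} _.

Section Defs.
Context {Gam B : Type} (st : BoundarySetting Gam B).

Definition d := dist st.
Definition ac := act st.

Definition stab (p : B) : Gam -> Prop := fun g => ac g p = p.

Definition coset (g : Gam) (p : B) : Gam -> Prop :=
  fun a => stab p (gmul st (ginv st g) a).

Definition translate (g : Gam) (A : B -> Prop) : B -> Prop :=
  fun x => A (ac (ginv st g) x).

Definition parabolic (z : B) : Prop :=
  exists g p, In p (Pi st) /\ z = ac g p.
Definition conical (z : B) : Prop := ~ parabolic z.

Definition openS (U : B -> Prop) : Prop :=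
  forall x, U x -> exists r, 0 < r /\ forall y, d x y < r -> U y.
Definition closure (A : B -> Prop) : B -> Prop :=
  fun x => forall r, 0 < r -> exists a, A a /\ d x a < r.
Definition nbhd (r : R) (A : B -> Prop) : B -> Prop :=
  fun x => exists a, A a /\ d x a < r.
(* closed r-neighbourhood: {x | d(x, A) <= r} *)
Definition cl_nbhd (r : R) (A : B -> Prop) : B -> Prop :=
  fun x => forall e, 0 < e -> exists a, A a /\ d x a < r + e.
Definition diam_lt (A : B -> Prop) (r : R) : Prop :=
  exists s, s < r /\ forall x y, A x -> A y -> d x y <= s.
Definition diam_gt (A : B -> Prop) (r : R) : Prop :=
  exists x y, A x /\ A y /\ r < d x y.
Definition seq_compact (K : B -> Prop) : Prop :=
  forall u : nat -> B, (forall n, K (u n)) ->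
    exists (phi : nat -> nat) l, (forall n, (phi n < phi (Datatypes.S n))%nat) /\ K l /\
      forall e, 0 < e -> exists N, forall n, (N <= n)%nat -> d (u (phi n)) l < e.

Definition disjoint (A A' : B -> Prop) : Prop := forall x, ~ (A x /\ A' x).

Definition finite_set {T : Type} (F : T -> Prop) : Prop :=
  exists l : list T, forall a, F a -> In a l.

Definition standing_hyps (D DPi eps : R) (K : B -> B -> Prop) : Prop :=
  0 < D /\
  (forall x y, x <> y -> exists g, D < d (ac g x) (ac g y)) /\
  0 < DPi /\
  (forall p, In p (Pi st) ->
     seq_compact (K p) /\ ~ K p p /\
     (forall x, x <> p <-> exists g k, stab p g /\ K p k /\ x = ac g k) /\
     diam_gt (K p) DPi /\
     (exists r, DPi < r /\ forall k, K p k -> r <= d k p)) /\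
  0 < eps /\ eps < D / 5 /\ eps < DPi / 5.

Definition automaton_hyps (eps : R) (Z : list B)
    (V W hV hW : B -> B -> Prop) (L : B -> Gam -> Prop) : Prop :=
  (forall z, In z Z ->
     openS (V z) /\ openS (W z) /\ openS (hV z) /\ openS (hW z) /\
     (conical z -> exists alpha,
        (forall a, L z a <-> a = alpha) /\
        (forall x, hV z x <-> V z (ac alpha x)) /\
        (forall x, hW z x <-> W z (ac alpha x))) /\
     (parabolic z -> exists g p, In p (Pi st) /\ z = ac g p /\
        (exists F : Gam -> Prop, finite_set F /\
           forall a, L z a <-> (coset g p a /\ ~ F a)) /\
        (forall x, hV z x -> hW z x) /\
        (forall x, hW z x -> x <> p) /\
        ~ cl_nbhd eps (hW z) p) /\
     diam_lt (W z) eps /\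
     diam_gt (hW z) (4 * eps) /\
     (forall x, cl_nbhd (2 * eps) (hV z) x -> hW z x) /\
     (forall x, W z x <-> (x = z \/ exists a, L z a /\ translate a (hW z) x)) /\
     (* (C5) *) (forall x, V z x <-> (x = z \/ exists a, L z a /\ translate a (hV z) x)) /\
     (forall x, closure (V z) x -> W z x)) /\
  (forall x, exists z, In z Z /\ V z x) /\
  (forall y z, In y Z -> In z Z ->
     (disjoint (closure (hV z)) (closure (V y)) <-> disjoint (hV z) (V y))).

Definition edge (Z : list B) (V hV : B -> B -> Prop) (L : B -> Gam -> Prop)
    (z : B) (alpha : Gam) (y : B) : Prop :=
  In z Z /\ In y Z /\ L z alpha /\ ~ disjoint (hV z) (V y).

(* alpha_1 ... alpha_k, with the labels indexed from 1 (alpha 0 unused) *)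
Fixpoint prodl (alpha : nat -> Gam) (k : nat) : Gam :=
  match k with
  | O => gone st
  | Datatypes.S k' => gmul st (prodl alpha k') (alpha k)
  end.
End Defs.

Section Codings.
Context {Gam B : Type} (st : BoundarySetting Gam B).
Context (Z : list B) (V W hV : B -> B -> Prop) (L : B -> Gam -> Prop).

Definition strict_conical_coding (zeta : B) : Prop :=
  exists (z : nat -> B) (alpha : nat -> Gam),
    (forall k, edge Z V hV L (z k) (alpha (Datatypes.S k)) (z (Datatypes.S k))) /\
    (forall k, translate st (prodl st alpha k) (closure st (W (z k))) zeta).

Definition strict_parabolic_coding (zeta : B) : Prop :=
  exists (n : nat) (z : nat -> B) (alpha : nat -> Gam),
    In (z O) Z /\
    (forall k, (k < n)%nat -> edge Z V hV L (z k) (alpha (Datatypes.S k)) (z (Datatypes.S k))) /\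
    parabolic st (z n) /\
    zeta = act st (prodl st alpha n) (z n).
End Codings.

(* Follow the automaton greedily.  By (C5) a point x of V(z) is either the
   parabolic vertex z itself, or lies in a translate a hV(z) with a in L(z)
   (a conical vertex z lies in alpha_z hV(z), as hV(z) = alpha_z^-1 V(z)).
   In the latter case a^-1 x lies in hV(z), which meets some V(y) of the
   cover, giving an edge z --a--> y along which the invariant "the current
   pull-back of zeta lies in V of the current vertex" is preserved.  Either
   the walk halts at a parabolic vertex equal to the pulled-back point, which
   is a strict parabolic coding, or it runs forever; then, since V(z) is
   contained in W(z), the invariant is exactly a strict conical coding. *)

From Stdlib Require Import Reals List Lia.
From Stdlib Require Import Classical ClassicalEpsilon.
Open Scope R_scope.

Section Runs.
Variables (State : Type) (Inv Halt : State -> Prop) (Next : State -> State -> Prop).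
Hypothesis step : forall s, Inv s -> Halt s \/ exists t, Next s t /\ Inv t.

Lemma infinite_or_halting_run (s0 : State) : Inv s0 ->
  (exists s : nat -> State, s O = s0 /\ (forall k, Inv (s k)) /\
     forall k, Next (s k) (s (S k))) \/
  (exists (n : nat) (s : nat -> State), s O = s0 /\ (forall k, Inv (s k)) /\
     (forall k, (k < n)%nat -> Next (s k) (s (S k))) /\ Halt (s n)).
Proof.
  intros Hs0.
  set (P := fun s t => Inv s -> Inv t /\ (Halt s \/ Next s t)).
  assert (HP : forall s, exists t, P s t).
  { intro s. destruct (classic (Inv s)) as [Hs | Hs].
    - destruct (step s Hs) as [Hh | [t [Hn Ht]]].
      + exists s. intros _. auto.
      + exists t. intros _. auto.
    - exists s. intro. contradiction. }
  set (f := fun s => epsilon (inhabits s) (P s)).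
  assert (Hf : forall s, P s (f s)) by (intro s; exact (epsilon_spec _ _ (HP s))).
  set (run := fun n => Nat.iter n f s0).
  assert (Hinv : forall k, Inv (run k)).
  { induction k as [|k IH]; [exact Hs0 | exact (proj1 (Hf _ IH))]. }
  assert (Hmove : forall k, Halt (run k) \/ Next (run k) (run (S k))).
  { intro k. exact (proj2 (Hf _ (Hinv k))). }
  assert (Hprefix : forall n,
      (exists m, Halt (run m) /\ forall k, (k < m)%nat -> Next (run k) (run (S k))) \/
      (forall k, (k < n)%nat -> Next (run k) (run (S k)))).
  { induction n as [|n [IH | IH]].
    - right. intros k Hk. lia.
    - left. exact IH.
    - destruct (Hmove n) as [Hh | Hn].
      + left. exists n. auto.
      + right. intros k Hk. destruct (Nat.eq_dec k n) as [-> | Hne]; auto.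
        apply IH. lia. }
  destruct (classic (forall k, Next (run k) (run (S k)))) as [Hall | Hstuck].
  - left. exists run. auto.
  - right. apply not_all_ex_not in Hstuck as [n Hn].
    destruct (Hmove n) as [Hh | ?]; [|contradiction].
    destruct (Hprefix n) as [[m [Hm Hpre]] | Hpre].
    + exists m, run. auto.
    + exists n, run. auto.
Qed.
End Runs.

Section GroupAction.
Variables (Gam B : Type) (st : BoundarySetting Gam B).

Lemma ginv1 : ginv st (gone st) = gone st.
Proof. rewrite <- (gmul1l _ _ st (ginv st (gone st))). apply gmulVr. Qed.

Lemma gmulKg (g h : Gam) : gmul st (ginv st g) (gmul st g h) = h.
Proof. rewrite gmulA, gmulVl. apply gmul1l. Qed.

Lemma gmulVKg (g h : Gam) : gmul st g (gmul st (ginv st g) h) = h.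
Proof. rewrite gmulA, gmulVr. apply gmul1l. Qed.

Lemma ginvM (g h : Gam) : ginv st (gmul st g h) = gmul st (ginv st h) (ginv st g).
Proof.
  assert (Hr : gmul st (gmul st g h) (gmul st (ginv st h) (ginv st g)) = gone st).
  { rewrite <- gmulA, gmulVKg. apply gmulVr. }
  rewrite <- (gmulKg (gmul st g h) (gmul st (ginv st h) (ginv st g))), Hr.
  symmetry. apply gmul1r.
Qed.

Lemma act_ginvM (g h : Gam) (x : B) :
  act st (ginv st (gmul st g h)) x = act st (ginv st h) (act st (ginv st g) x).
Proof. rewrite ginvM. apply actM. Qed.

Lemma actVK (g : Gam) (x : B) : act st g (act st (ginv st g) x) = x.
Proof. rewrite <- actM, gmulVr. apply act1. Qed.

Definition increments (g : nat -> Gam) (k : nat) : Gam :=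
  match k with
  | O => gone st
  | S k' => gmul st (ginv st (g k')) (g k)
  end.

Lemma prodl_increments (g : nat -> Gam) : g O = gone st ->
  forall k, prodl st (increments g) k = g k.
Proof.
  intros Hg0 k. induction k as [|k IH]; simpl.
  - symmetry. exact Hg0.
  - rewrite IH. apply gmulVKg.
Qed.

Lemma closure_subset (A : B -> Prop) (x : B) : A x -> closure st A x.
Proof.
  intros Hx r Hr. exists x. split; [exact Hx |].
  unfold d. rewrite (proj2 (dist_eq0 _ _ st x x) eq_refl). exact Hr.
Qed.
End GroupAction.

Arguments increments {Gam B} st g k.

Section Automaton.
Variables (Gam B : Type) (st : BoundarySetting Gam B).
Variables (eps : R) (Z : list B) (V W hV hW : B -> B -> Prop) (L : B -> Gam -> Prop).
Hypothesis Haut : automaton_hyps st eps Z V W hV hW L.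

Lemma V_cover (x : B) : exists z, In z Z /\ V z x.
Proof. exact (proj1 (proj2 Haut) x). Qed.

Lemma V_sub_W (z x : B) : In z Z -> V z x -> W z x.
Proof.
  intros Hz Hx. destruct (proj1 Haut z Hz) as (_&_&_&_&_&_&_&_&_&_&_&Hcl).
  apply Hcl, closure_subset, Hx.
Qed.

Lemma V_label (z x : B) : In z Z -> V z x ->
  (parabolic st z /\ x = z) \/ exists a, L z a /\ hV z (ac st (ginv st a) x).
Proof.
  intros Hz Hx. destruct (proj1 Haut z Hz) as (_&_&_&_&Hcon&_&_&_&_&_&HC5&_).
  destruct (proj1 (HC5 x) Hx) as [-> | [a [La Ha]]].
  - destruct (classic (parabolic st z)) as [Hp | Hc]; [left; auto |].
    right. destruct (Hcon Hc) as [a [HL [HhV _]]].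
    exists a. split; [apply HL; reflexivity |].
    apply HhV. unfold ac. rewrite actVK. exact Hx.
  - right. exists a. auto.
Qed.

Lemma V_step (z x : B) : In z Z -> V z x ->
  (parabolic st z /\ x = z) \/
  exists a y, edge Z V hV L z a y /\ V y (ac st (ginv st a) x).
Proof.
  intros Hz Hx. destruct (V_label z x Hz Hx) as [Hp | [a [La Ha]]]; [left; exact Hp |].
  right. destruct (V_cover (ac st (ginv st a) x)) as [y [Hy Vy]].
  exists a, y. repeat split; auto.
  intro Hdis. exact (Hdis _ (conj Ha Vy)).
Qed.

(* A state (z, g) stands for the vertex z reached after reading a word with
   product g; the label of the edge between consecutive states (z, g) and
   (y, h) is recovered as g^-1 h. *)
Definition state_inv (zeta : B) (s : B * Gam) : Prop :=
  In (fst s) Z /\ V (fst s) (ac st (ginv st (snd s)) zeta).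

Definition state_halt (zeta : B) (s : B * Gam) : Prop :=
  parabolic st (fst s) /\ ac st (ginv st (snd s)) zeta = fst s.

Definition state_edge (s t : B * Gam) : Prop :=
  edge Z V hV L (fst s) (gmul st (ginv st (snd s)) (snd t)) (fst t).

Lemma state_step (zeta : B) (s : B * Gam) : state_inv zeta s ->
  state_halt zeta s \/ exists t, state_edge s t /\ state_inv zeta t.
Proof.
  destruct s as [z g]. intros [Hz Hx].
  destruct (V_step z _ Hz Hx) as [Hh | [a [y [He Hy]]]]; [left; exact Hh |].
  right. exists (y, gmul st g a). unfold state_edge, state_inv. simpl.
  rewrite gmulKg. split; [exact He |]. split; [apply He |].
  unfold ac. rewrite act_ginvM. exact Hy.
Qed.

Theorem strict_coding_exists (zeta : B) :
  strict_conical_coding st Z V W hV L zeta \/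
  strict_parabolic_coding st Z V hV L zeta.
Proof.
  destruct (V_cover zeta) as [z0 [Hz0 Hv0]].
  assert (Hs0 : state_inv zeta (z0, gone st)).
  { split; [exact Hz0 |]. simpl. rewrite ginv1. unfold ac. rewrite act1. exact Hv0. }
  destruct (infinite_or_halting_run _ _ _ _ (state_step zeta) _ Hs0)
    as [[s [H0 [Hinv Hnext]]] | [n [s [H0 [Hinv [Hnext [Hp Hn]]]]]]];
    assert (Hprod : forall k, prodl st (increments st (fun k => snd (s k))) k = snd (s k))
      by (apply prodl_increments; rewrite H0; reflexivity).
  - left. exists (fun k => fst (s k)), (increments st (fun k => snd (s k))).
    split; [exact Hnext |].
    intro k. unfold translate. rewrite Hprod. apply closure_subset.
    destruct (Hinv k) as [Hz Hx]. exact (V_sub_W _ _ Hz Hx).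
  - right. exists n, (fun k => fst (s k)), (increments st (fun k => snd (s k))).
    split; [rewrite H0; exact Hz0 |]. split; [exact Hnext |]. split; [exact Hp |].
    rewrite Hprod, <- Hn. symmetry. apply actVK.
Qed.
End Automaton.

(* Only the cover by the V(z), (C5) and V(z) ⊆ W(z) are needed for existence
   of codings; the standing hypotheses are not. *)
Theorem mainTheorem7 (Gam B : Type) (st : BoundarySetting Gam B)
    (D DPi eps : R) (K : B -> B -> Prop)
    (Z : list B) (V W hV hW : B -> B -> Prop) (L : B -> Gam -> Prop) :
  standing_hyps st D DPi eps K ->
  automaton_hyps st eps Z V W hV hW L ->
  forall zeta : B,
    strict_conical_coding st Z V W hV L zeta \/
    strict_parabolic_coding st Z V hV L zeta.
Proof. intros _ Haut. exact (strict_coding_exists _ _ st eps Z V W hV hW L Haut). Qed.
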